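(* Let $q\in(0,1]$. Then $\mathrm{Kaz}(\rho,R(SU_q(2)))=1-\frac{2}{[2]_q}=\frac{(1-q)^2}{q^2+1}$.
   Context: $R(SU_q(2))$ is the fusion algebra with irreducible objects $I=\mathbb{Z}_+$, unit $0$, trivial involution, product $m\cdot n=\sum_{k\in\{|m-n|,|m-n|+2,\dots,m+n\}}k=\sum_k N^k_{m,n}k$, and dimension $d(n)=[n+1]_q$, where $[x]_q=\frac{q^{-x}-q^x}{q^{-1}-q}$ for $0<q<1$ and $[x]_1=x$. Let $\mathcal{C}_R=\mathbb{C}[I]$ be its complexification (a unital $*$-algebra). The right regular representation $\rho:\mathcal{C}_R\to B(\ell^2(I))$ is given by $\rho(m)\delta_n=\sum_{k\in I}N^k_{n,\bar m}\delta_k$. A finite generating set is a finite $X\subseteq I$ such that every element of $I$ appears with nonzero coefficient in some product of elements of $X$. For a unital $*$-representation $\pi$ on $H_\pi$ and a finite generating set $X$, $\mathrm{Kaz}(X,\pi,R)=\inf_{\xi\in H_\pi,\|\xi\|=1}\max_{m\in X}\frac{\|\pi(m)\xi-d(m)\xi\|}{d(m)}$, and $\mathrm{Kaz}(\pi,R)=\inf_X\mathrm{Kaz}(X,\pi,R)$ over all finite generating sets $X$. *)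

From HB Require Import structures.
From mathcomp Require Import all_boot all_order all_algebra.
From mathcomp Require Import all_classical all_reals all_analysis.
Set Implicit Arguments. Unset Strict Implicit. Unset Printing Implicit Defensive.
Import Order.TTheory GRing.Theory Num.Theory.
Local Open Scope classical_set_scope.
Local Open Scope ring_scope.

(* Irreducible objects I = nat; unit 0; trivial involution (conj m = m). *)

Definition Nfus (k m n : nat) : nat :=
  [&& (`|m%:Z - n%:Z|%N <= k)%N, (k <= m + n)%N & ~~ odd (k + m + n)].

(* coefficient of k in the product m_1 . m_2 . ... . m_r (empty product = unit 0).
   The product m . y has k-coefficient sum_j N^k_{m,j} y_j, and N^k_{m,j} = 0
   unless j <= k + m, so the sum is finite. *)
Fixpoint prodcoef (w : seq nat) (k : nat) : nat :=
  match w with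
  | [::] => (k == 0)%N
  | m :: w' => \sum_(j < (k + m).+1) Nfus k m j * prodcoef w' j
  end.

Definition fin_gen_set (X : seq nat) : Prop :=
  forall k : nat, exists w : seq nat, all (fun m => m \in X) w /\ prodcoef w k != 0%N.

Definition qint {R : realType} (q : R) (x : nat) : R :=
  if q == 1 then x%:R else (q ^- x - q ^+ x) / (q^-1 - q).

Definition qdim {R : realType} (q : R) (n : nat) : R := qint q n.+1.

(* A complex-valued vector on I is encoded by its real and imaginary parts. *)
Definition cvec (R : realType) := nat -> R * R.

Definition modsq {R : realType} (z : R * R) : R := z.1 ^+ 2 + z.2 ^+ 2.

Definition normsq {R : realType} (xi : cvec R) : \bar R :=
  (\sum_(0 <= k <oo) (modsq (xi k))%:E)%E.

Definition l2 {R : realType} (xi : cvec R) : Prop := (normsq xi < +oo)%E.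

Definition l2norm {R : realType} (xi : cvec R) : \bar R :=
  if pselect (l2 xi) is left _ then (Num.sqrt (fine (normsq xi)))%:E else +oo%E.

(* Right regular representation: rho(m) delta_n = sum_k N^k_{n, conj m} delta_k,
   with conj m = m.  On a general vector, (rho(m) xi)_k = sum_n N^k_{n,m} xi_n,
   a finite sum since N^k_{n,m} = 0 unless n <= k + m. *)
Definition rho {R : realType} (m : nat) (xi : cvec R) : cvec R :=
  fun k => (\sum_(n < (k + m).+1) (Nfus k n m)%:R * (xi n).1,
            \sum_(n < (k + m).+1) (Nfus k n m)%:R * (xi n).2).

Definition subscal {R : realType} (v xi : cvec R) (c : R) : cvec R :=
  fun k => ((v k).1 - c * (xi k).1, (v k).2 - c * (xi k).2).

Definition kaz_val {R : realType} (q : R) (X : seq nat) (xi : cvec R) : \bar R :=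
  (\big[maxe/0%E]_(m <- X)
     (l2norm (subscal (rho m xi) xi (qdim q m)) * ((qdim q m)^-1)%:E))%E.

Definition KazX {R : realType} (q : R) (X : seq nat) : \bar R :=
  ereal_inf [set kaz_val q X xi | xi in [set xi : cvec R | normsq xi = 1%E]].

Definition Kaz_rho {R : realType} (q : R) : \bar R :=
  ereal_inf [set KazX q X | X in [set X : seq nat | fin_gen_set X]].

From HB Require Import structures.
From mathcomp Require Import all_boot all_order all_algebra.
From mathcomp Require Import all_classical all_reals all_analysis.
From mathcomp Require Import zify ring lra.
Import Order.TTheory GRing.Theory Num.Theory.
Set Implicit Arguments. Unset Strict Implicit. Unset Printing Implicit Defensive.
Local Open Scope ring_scope.

(* A generating set contains some m > 0, because products of the
   unit object 0 only contain 0.  The matrix of rho(m) is a 0/1 matrix with at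
   most m+1 ones in each row and column, so ||rho(m)|| <= m+1 and
   ||rho(m) xi - d(m) xi|| >= d(m) - (m+1) for every unit vector xi.  From
   [n+2]_q = [n]_q + q^-(n+1) + q^(n+1) >= [n]_q + [2]_q one gets
   (m+1) [2]_q <= 2 [m+1]_q, i.e. 1 - (m+1)/d(m) >= 1 - 2/[2]_q.  X = {1} generates, and rho(1) is the sum of the two shifts
   k -> k - 1 and k -> k + 1.  On the normalized indicator vector of
   {0, ..., n+1} it acts as multiplication by 2 except at the two ends, so the
   normalized defect ||rho(1) xi - [2]_q xi|| / [2]_q tends to ([2]_q - 2)/[2]_q. *)

Section InvAddSelf.
Variable R : realFieldType.

Lemma two_le_invD (x : R) : 0 < x -> 2 <= x^-1 + x.
Proof.
move=> x_gt0; rewrite -subr_ge0.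
have -> : x^-1 + x - 2 = (1 - x) ^+ 2 / x by field; rewrite gt_eqF.
by rewrite divr_ge0 ?sqr_ge0 ?ltW.
Qed.

Lemma invD_le_invD (a b : R) : 0 < b -> b <= a -> a <= 1 ->
  a^-1 + a <= b^-1 + b.
Proof.
move=> b_gt0 le_ba le_a1; have a_gt0 : 0 < a := lt_le_trans b_gt0 le_ba.
have le_b1 : b <= 1 := le_trans le_ba le_a1.
rewrite -subr_ge0.
have -> : b^-1 + b - (a^-1 + a) = (a - b) * (1 - a * b) / (a * b).
  by field; rewrite !gt_eqF.
have ab_le1 : a * b <= 1 := mulr_ile1 (ltW a_gt0) (ltW b_gt0) le_a1 le_b1.
by rewrite divr_ge0 ?mulr_ge0 ?subr_ge0 // ltW ?mulr_gt0.
Qed.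

End InvAddSelf.

Section QNumbers.
Variables (R : realType) (q : R).
Hypotheses (q_gt0 : 0 < q) (q_le1 : q <= 1).

Lemma qint0 : qint q 0 = 0.
Proof. by rewrite /qint expr0 invr1 subrr mul0r if_same. Qed.

Lemma one_sub_sqr_neq0 : q != 1 -> 1 - q * q != 0.
Proof.
move=> q_neq1; rewrite subr_eq0 eq_sym -expr2 sqrf_eq1 negb_or q_neq1 /=.
by apply: contraTneq q_gt0 => ->; rewrite ltr0N1.
Qed.

Lemma qint1 : qint q 1 = 1.
Proof.
rewrite /qint; case: ifPn => // /one_sub_sqr_neq0 sqr_neq1.
by rewrite expr1; field; rewrite mulNr sqr_neq1 gt_eqF.
Qed.

Lemma qintSS n : qint q n.+2 = qint q n + ((q ^+ n.+1)^-1 + q ^+ n.+1).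
Proof.
rewrite /qint; case: ifPn => [/eqP-> | /one_sub_sqr_neq0 sqr_neq1].
  by rewrite !expr1n invr1 -addn2 natrD.
by rewrite !exprS; field; rewrite mulNr sqr_neq1 expf_neq0 gt_eqF.
Qed.

Lemma qint2 : qint q 2 = q^-1 + q.
Proof. by rewrite qintSS qint0 add0r expr1. Qed.

Lemma qint2_ge2 : 2 <= qint q 2.
Proof. by rewrite qint2 two_le_invD. Qed.

Lemma qintSS_ge n : qint q n + qint q 2 <= qint q n.+2.
Proof.
rewrite [qint q n.+2]qintSS lerD2l qint2 invD_le_invD ?exprn_gt0 //.
by rewrite exprS ger_pMr // exprn_ile1 // ltW.
Qed.

Lemma qint_mul2_le n : n.+2%:R * qint q 2 <= 2 * qint q n.+2.
Proof.
elim/ltn_ind: n => -[|[|n]] IH; first by rewrite mulrC.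
  have := qint2_ge2; rewrite (qintSS 1) qint1.
  have -> : q ^- 2 + q ^+ 2 = qint q 2 ^+ 2 - 2.
    by rewrite qint2; field; rewrite gt_eqF.
  (* with a = [2]_q >= 2 this is (2 a + 1) (a - 2) >= 0 *)
  nra.
have := IH n (ltnW (ltnSn _)); have := qintSS_ge n.+2.
rewrite -[n.+4]addn2 natrD; lra.
Qed.

Lemma qdim_ge m : m.+1%:R <= qdim q m.
Proof.
rewrite /qdim; case: m => [|m]; first by rewrite qint1.
have := qint_mul2_le m; have := qint2_ge2; have : 0 <= m.+2%:R :> R by [].
nra.
Qed.

Lemma qdim_gt0 m : 0 < qdim q m.
Proof. exact: lt_le_trans (qdim_ge m). Qed.

Lemma ratio_qdim_le m : (0 < m)%N -> m.+1%:R / qdim q m <= 2 / qint q 2.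
Proof.
case: m => // m _; have D_gt0 : 0 < qint q 2 := lt_le_trans (ltr0Sn _ 1) qint2_ge2.
rewrite ler_pdivrMr ?qdim_gt0 // mulrAC ler_pdivlMr //; exact: qint_mul2_le.
Qed.

End QNumbers.

Lemma NfusE k a b : Nfus k a b =
  [&& (a <= k + b)%N, (b <= k + a)%N, (k <= a + b)%N & ~~ odd (k + a + b)].
Proof.
rewrite /Nfus.
have -> : (`|a%:Z - b%:Z|%N <= k)%N = (a <= k + b)%N && (b <= k + a)%N.
  by apply/idP/andP; [move=> ?; split; lia | case=> ? ?; lia].
by rewrite -andbA.
Qed.

Lemma Nfus_sym k n m : Nfus k n m = Nfus n k m.
Proof.
by rewrite !NfusE; congr (nat_of_bool _); apply/and4P/and4P => -[? ? ? ?]; split; lia.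
Qed.

Lemma sum_ord_eq_le1 K c : (\sum_(n < K) (n == c :> nat) <= 1)%N.
Proof.
rewrite (_ : \sum_(n < K) _ = \sum_(n < K | n == c :> nat) 1)%N.
  by rewrite (big_ord1_eq _ (fun _ => 1%N)); case: ifP.
by rewrite [RHS]big_mkcond.
Qed.

Lemma sum_Nfus_le k m K : (\sum_(n < K) Nfus k n m <= m.+1)%N.
Proof.
have Nfus_le n : (Nfus k n m <= \sum_(i < m.+1) (n == k + m - 2 * i :> nat))%N.
  rewrite NfusE; case: and4P => //= -[? ? ? ?].
  have lt_i : ((k + m - n) %/ 2 < m.+1)%N by lia.
  by rewrite (bigD1 (Ordinal lt_i)) //= (_ : n == _) //; apply/eqP; lia.
apply: (@leq_trans (\sum_(n < K) \sum_(i < m.+1) (n == k + m - 2 * i :> nat))).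
  by apply: leq_sum => n _; apply: Nfus_le.
rewrite exchange_big /= -[m.+1 in X in (_ <= X)%N]card_ord -sum1_card.
by apply: leq_sum => i _; apply: sum_ord_eq_le1.
Qed.

Section RealSums.
Variable R : realFieldType.

Lemma weighted_sum_sqr_le K (w x : 'I_K -> R) : (forall i, 0 <= w i) ->
  (\sum_(i < K) w i * x i) ^+ 2 <=
  (\sum_(i < K) w i) * (\sum_(i < K) w i * x i ^+ 2).
Proof.
move=> w_ge0.
have sum_mul (f g : 'I_K -> R) :
    \sum_(i < K) \sum_(j < K) f i * g j = (\sum_i f i) * (\sum_j g j).
  by rewrite mulr_suml; apply: eq_bigr => i _; rewrite mulr_sumr.
have : 0 <= \sum_(i < K) \sum_(j < K) w i * w j * (x i - x j) ^+ 2.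
  by do 2![apply: sumr_ge0 => ? _]; rewrite mulr_ge0 ?sqr_ge0 ?mulr_ge0.
have -> : \sum_(i < K) \sum_(j < K) w i * w j * (x i - x j) ^+ 2 =
    \sum_(i < K) \sum_(j < K) (w i * x i ^+ 2) * w j
  + \sum_(i < K) \sum_(j < K) w i * (w j * x j ^+ 2)
  - 2 * \sum_(i < K) \sum_(j < K) (w i * x i) * (w j * x j).
  rewrite mulr_sumr -big_split -sumrB; apply: eq_bigr => i _ /=.
  rewrite mulr_sumr -big_split -sumrB; apply: eq_bigr => j _ /=.
  ring.
rewrite !sum_mul expr2; lra.
Qed.

Lemma ler_sum_ord_widen (F : nat -> R) n1 n2 : (n1 <= n2)%N ->
  (forall i, 0 <= F i) -> \sum_(i < n1) F i <= \sum_(i < n2) F i.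
Proof.
move=> le_n12 F_ge0; rewrite -!(big_mkord xpredT F) (big_cat_nat _ le_n12) //=.
by rewrite lerDl sumr_ge0.
Qed.

End RealSums.

Section SchurTest.
Variable R : realFieldType.

Lemma sum_Nfus_ler k m K : \sum_(n < K) (Nfus k n m)%:R <= m.+1%:R :> R.
Proof. by rewrite -natr_sum ler_nat sum_Nfus_le. Qed.

(* Schur test: each row and each column of (N^k_{n,m})_{k,n} has at most m+1
   nonzero entries, all equal to 1. *)
Lemma sum_sqr_rho_le (x : nat -> R) m N :
  \sum_(k < N) (\sum_(n < (k + m).+1) (Nfus k n m)%:R * x n) ^+ 2 <=
  m.+1%:R ^+ 2 * \sum_(n < N + m) x n ^+ 2.
Proof.
have row_le (k : 'I_N) :
    (\sum_(n < (k + m).+1) (Nfus k n m)%:R * x n) ^+ 2 <=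
    m.+1%:R * \sum_(n < N + m) (Nfus k n m)%:R * x n ^+ 2.
  have := @weighted_sum_sqr_le R (k + m).+1 (fun n => (Nfus k n m)%:R) (fun n => x n).
  move=> /(_ (fun _ => ler0n _ _)) /le_trans; apply.
  apply: ler_pM.
  - exact: sumr_ge0.
  - by apply: sumr_ge0 => i _; rewrite mulr_ge0 ?sqr_ge0.
  - exact: sum_Nfus_ler.
  - apply: (ler_sum_ord_widen (F := fun n => (Nfus k n m)%:R * x n ^+ 2)).
      by have := ltn_ord k; lia.
    by move=> i; rewrite mulr_ge0 ?sqr_ge0.
apply: le_trans (ler_sum _ (fun k _ => row_le k)) _.
rewrite -mulr_sumr exprS -mulrA ler_wpM2l // exchange_big mulr_sumr /=.
apply: ler_sum => n _; rewrite -mulr_suml ler_wpM2r ?sqr_ge0 //.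
under eq_bigr do rewrite Nfus_sym.
exact: sum_Nfus_ler.
Qed.

End SchurTest.

Section SquareSummable.
Variable R : realType.
Implicit Type f : cvec R.
Local Open Scope ereal_scope.

Lemma modsq_ge0 (z : R * R) : (0 <= modsq z)%R.
Proof. by rewrite addr_ge0 ?sqr_ge0. Qed.

Lemma sum_modsq_le_normsq f N : (\sum_(k < N) modsq (f k))%:E <= normsq f.
Proof.
rewrite -sumEFin -(big_mkord xpredT (fun k => (modsq (f k))%:E)).
by apply: nneseries_lim_ge => k _ _; rewrite lee_fin modsq_ge0.
Qed.

Lemma normsq_ge0 f : 0 <= normsq f.
Proof. by have := sum_modsq_le_normsq f 0; rewrite big_ord0. Qed.

Lemma normsq_le_of_partial_sums f (C : R) :
  (forall N, (\sum_(k < N) modsq (f k) <= C)%R) -> normsq f <= C%:E.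
Proof.
move=> sum_le; apply: lime_le.
  by apply: is_cvg_nneseries => k _ _; rewrite lee_fin modsq_ge0.
by apply: nearW => N; rewrite big_mkord sumEFin lee_fin.
Qed.

Lemma normsq_finite_support f K : (forall k, (K <= k)%N -> modsq (f k) = 0%R) ->
  normsq f = (\sum_(k < K) modsq (f k))%:E.
Proof.
move=> f_eq0; rewrite /normsq (@nneseries_split R _ 0 K); last first.
  by move=> k _; rewrite lee_fin modsq_ge0.
by rewrite add0n eseries0 ?adde0 ?big_mkord ?sumEFin // => k K_le _; rewrite f_eq0.
Qed.

Lemma l2norm_ge0 f : 0 <= l2norm f.
Proof. by rewrite /l2norm; case: pselect => _ //; rewrite lee_fin sqrtr_ge0. Qed.

End SquareSummable.

Section RhoLowerBound.
Variable R : realType.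

Lemma sqr_defect_ge (M d x y : R) : 0 <= d ->
  M * d * (d - M) * x ^+ 2 - (d - M) * y ^+ 2 <= M * (y - d * x) ^+ 2.
Proof.
move=> d_ge0; rewrite -subr_ge0.
have -> : M * (y - d * x) ^+ 2 - (M * d * (d - M) * x ^+ 2 - (d - M) * y ^+ 2) =
  d * (y - M * x) ^+ 2 by ring.
by rewrite mulr_ge0 ?sqr_ge0.
Qed.

Lemma sum_modsq_rho_le (xi : cvec R) m N : normsq xi = 1%E ->
  \sum_(k < N) modsq (rho m xi k) <= m.+1%:R ^+ 2.
Proof.
move=> xi_unit; have := sum_modsq_le_normsq xi (N + m).
rewrite xi_unit lee_fin /modsq !big_split /= => xi_le1.
apply: le_trans (lerD (sum_sqr_rho_le (fun n => (xi n).1) m N)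
                      (sum_sqr_rho_le (fun n => (xi n).2) m N)) _.
by rewrite -mulrDr ler_piMr ?sqr_ge0.
Qed.

Lemma normsq_rho_sub_ge (xi : cvec R) m (d : R) : normsq xi = 1%E ->
  m.+1%:R < d -> (((d - m.+1%:R) ^+ 2)%:E <= normsq (subscal (rho m xi) xi d))%E.
Proof.
(* Summing sqr_defect_ge over k < N, with ||rho(m) xi||^2 <= M^2, bounds
   d (d - M) ||xi||^2 by ||v||^2 + (d - M) M without any triangle inequality
   in l^2. *)
move=> xi_unit lt_Md; set M : R := m.+1%:R; set v := subscal (rho m xi) xi d.
have M_gt0 : 0 < M by rewrite ltr0Sn.
have dM_gt0 : 0 < d * (d - M) by rewrite mulr_gt0 ?subr_gt0 // (lt_trans M_gt0).
have partial_ge N : d * (d - M) * \sum_(k < N) modsq (xi k) - (d - M) * M <=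
                    \sum_(k < N) modsq (v k).
  have pointwise k : M * d * (d - M) * modsq (xi k) - (d - M) * modsq (rho m xi k)
                     <= M * modsq (v k).
    have d_ge0 : 0 <= d by rewrite ltW // (lt_trans M_gt0).
    have := sqr_defect_ge M (xi k).1 (rho m xi k).1 d_ge0.
    have := sqr_defect_ge M (xi k).2 (rho m xi k).2 d_ge0.
    rewrite /modsq /v /subscal /=; lra.
  have : \sum_(k < N) (M * d * (d - M) * modsq (xi k) - (d - M) * modsq (rho m xi k))
         <= \sum_(k < N) M * modsq (v k) by apply: ler_sum => k _; exact: pointwise.
  rewrite sumrB -!mulr_sumr => sum_le.
  have := sum_modsq_rho_le m N xi_unit.
  have : 0 <= d - M by rewrite subr_ge0 ltW.
  rewrite -(ler_pM2l M_gt0); nra.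
case v_norm: (normsq v) => [r| |]; last 2 first.
- by rewrite leey.
- by have := normsq_ge0 v; rewrite v_norm.
have : (normsq xi <= ((r + (d - M) * M) / (d * (d - M)))%:E)%E.
  apply: normsq_le_of_partial_sums => N; rewrite ler_pdivlMr //.
  have := sum_modsq_le_normsq v N; rewrite v_norm lee_fin.
  have := partial_ge N; lra.
rewrite xi_unit lee_fin ler_pdivlMr // mul1r lee_fin; nra.
Qed.

Lemma l2norm_rho_sub_ge (xi : cvec R) m (d : R) : normsq xi = 1%E ->
  m.+1%:R <= d ->
  ((1 - m.+1%:R / d)%:E <= l2norm (subscal (rho m xi) xi d) * (d^-1)%:E)%E.
Proof.
move=> xi_unit le_Md; set M : R := m.+1%:R; set v := subscal (rho m xi) xi d.
have d_gt0 : 0 < d by apply: lt_le_trans le_Md.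
have dV_gt0 : 0 < d^-1 by rewrite invr_gt0.
have -> : 1 - M / d = (d - M) * d^-1 by rewrite mulrBl divff ?gt_eqF.
move: le_Md; rewrite -/M le_eqVlt => /orP[/eqP eq_Md | lt_Md].
  by rewrite eq_Md subrr mul0r mule_ge0 ?l2norm_ge0 // lee_fin ltW.
rewrite /l2norm; case: pselect => [v_l2 | _]; last first.
  by rewrite mulyr gtr0_sg // mul1e leey.
have := normsq_rho_sub_ge xi_unit lt_Md; rewrite -/M -/v.
have := normsq_ge0 v; move: v_l2; rewrite /l2.
case: (normsq v) => [r _ | | _ _]; rewrite ?ltxx //= !lee_fin => r_ge0 sqr_le.
have dM_ge0 : 0 <= d - M by rewrite subr_ge0 ltW.
by rewrite ler_wpM2r ?(ltW dV_gt0) // -(ger0_norm dM_ge0) -sqrtr_sqr ler_sqrt.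
Qed.

End RhoLowerBound.

Lemma prodcoef_zeros (w : seq nat) k : all (pred1 0%N) w -> prodcoef w k = (k == 0)%N.
Proof.
elim: w k => [|a w IH] k //= /andP[/eqP-> w0].
rewrite big_ord_recl IH // big1 => [|i _]; last by rewrite IH // muln0.
by rewrite addn0 muln1 NfusE; case: k.
Qed.

Lemma fin_gen_set_has_pos (X : seq nat) : fin_gen_set X -> exists2 m, m \in X & (0 < m)%N.
Proof.
move=> X_gen; apply/hasP; apply: contraT => /hasPn X_le0.
have [w [/allP wX]] := X_gen 1%N; rewrite prodcoef_zeros //.
by apply/allP => m /wX /X_le0; rewrite lt0n negbK.
Qed.

Section KazLowerBound.
Variables (R : realType) (q : R).
Hypotheses (q_gt0 : 0 < q) (q_le1 : q <= 1).
Local Open Scope ereal_scope.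

Lemma Kaz_rho_ge : (1 - 2 / qint q 2)%:E <= Kaz_rho q.
Proof.
apply/ereal_infP => _ [X /fin_gen_set_has_pos[m mX m_gt0] <-].
apply/ereal_infP => _ [xi xi_unit <-].
rewrite /kaz_val; apply: le_trans _ (le_bigmax_seq _ _ _ _ mX isT).
apply: le_trans _ (l2norm_rho_sub_ge xi_unit (qdim_ge q_gt0 q_le1 m)).
by rewrite lee_fin lerD2l lerN2 ratio_qdim_le.
Qed.

End KazLowerBound.

Lemma Nfus_1 k n : Nfus k n 1 = ((n == k.+1) || (n.+1 == k)) :> nat.
Proof.
rewrite NfusE; congr nat_of_bool; apply/and4P/orP.
  by case=> ? ? ? ?; lia.
by case=> /eqP eq_n; split; lia.
Qed.

Lemma prodcoef_nseq1 k : prodcoef (nseq k 1%N) k != 0%N.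
Proof.
rewrite -lt0n; elim: k => //= k IH.
have lt_k : (k < (k.+1 + 1).+1)%N by lia.
have N_k : Nfus k.+1 1 k = 1%N by rewrite NfusE; case: and4P => // -[]; split; lia.
by rewrite (bigD1 (Ordinal lt_k)) //= N_k mul1n ltn_addr.
Qed.

Lemma fin_gen_set1 : fin_gen_set [:: 1%N].
Proof.
move=> k; exists (nseq k 1%N); split; last exact: prodcoef_nseq1.
by apply/allP => m /nseqP[-> _]; rewrite inE.
Qed.

Section UpperBound.
Variable R : realType.

Lemma sum_rho1 (x : nat -> R) k :
  \sum_(n < (k + 1).+1) (Nfus k n 1)%:R * x n =
  (if k is k'.+1 then x k' else 0) + x k.+1.
Proof.
rewrite addn1 big_ord_recr /= Nfus_1 eqxx mul1r; congr (_ + _).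
case: k => [|k]; first by rewrite big_ord1 Nfus_1 /= mul0r.
have lt_k : (k < k.+2)%N by [].
rewrite (bigD1 (Ordinal lt_k)) //= Nfus_1 eqxx orbT mul1r big1 ?addr0 // => n ne_nk.
have ne_nk' : (n == k :> nat) = false := negbTE ne_nk.
by rewrite Nfus_1 (ltn_eqF (ltn_ord n)) /= eqSS ne_nk' mul0r.
Qed.

Definition unif (n k : nat) : R := if (k < n.+2)%N then (Num.sqrt n.+2%:R)^-1 else 0.

Definition unif_vec n : cvec R := fun k => (unif n k, 0).

Lemma unif_lt n k : (k < n.+2)%N -> unif n k = (Num.sqrt n.+2%:R)^-1.
Proof. by rewrite /unif => ->. Qed.

Lemma unif_ge n k : (n.+2 <= k)%N -> unif n k = 0.
Proof. by move=> le_k; rewrite /unif ltnNge le_k. Qed.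

Lemma sqr_sqrtrV n : (Num.sqrt n.+2%:R)^-1 ^+ 2 = n.+2%:R^-1 :> R.
Proof. by rewrite exprVn sqr_sqrtr. Qed.

Lemma normsq_unif_vec n : normsq (unif_vec n) = 1%E.
Proof.
rewrite (@normsq_finite_support _ _ n.+2) => [|k le_k]; last first.
  by rewrite /modsq /= unif_ge // expr0n addr0.
rewrite (eq_bigr (fun=> n.+2%:R^-1)) => [|k _]; last first.
  by rewrite /modsq /= unif_lt // expr0n addr0 sqr_sqrtrV.
by rewrite sumr_const card_ord -(mulr_natr (n.+2%:R^-1)) mulVf.
Qed.

Lemma normsq_rho1_unif_sub n (d : R) :
  normsq (subscal (rho 1 (unif_vec n)) (unif_vec n) d) =
  ((2 * (1 - d) ^+ 2 + 1 + n%:R * (2 - d) ^+ 2) / n.+2%:R)%:E.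
Proof.
set v := subscal _ _ d.
have v_coord k : modsq (v k) =
    ((if k is k'.+1 then unif n k' else 0) + unif n k.+1 - d * unif n k) ^+ 2.
  rewrite /v /subscal /rho /modsq /= sum_rho1 big1 => [|? _]; last exact: mulr0.
  by rewrite mulr0 subr0 expr0n addr0.
rewrite (@normsq_finite_support _ _ n.+3) => [|[//|k] le_k]; last first.
  by rewrite v_coord !unif_ge ?addr0 ?mulr0 ?subr0 ?expr0n //; lia.
congr EFin; rewrite big_ord_recr big_ord_recr big_ord_recl /=.
rewrite (eq_bigr (fun=> ((Num.sqrt n.+2%:R)^-1 * (2 - d)) ^+ 2)) => [|k _]; last first.
  rewrite v_coord /bump /= add1n !unif_lt; try (have := ltn_ord k; lia).
  by congr (_ ^+ 2); ring.
rewrite sumr_const card_ord !v_coord /= (@unif_lt n 0) // (@unif_lt n 1) //.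
rewrite (@unif_lt n n) // (@unif_lt n n.+1) // !unif_ge // -sqr_sqrtrV; ring.
Qed.

Lemma sqrt_defect_le (D e : R) : 2 <= D -> 0 < e -> exists n : nat,
  Num.sqrt ((2 * (1 - D) ^+ 2 + 1 + n%:R * (2 - D) ^+ 2) / n.+2%:R) / D
  <= 1 - 2 / D + e.
Proof.
move=> D_ge2 e_gt0; have D_gt0 : 0 < D by apply: lt_le_trans D_ge2.
set C := 2 * (1 - D) ^+ 2 + 1; set b := e * D.
have b_gt0 : 0 < b ^+ 2 by rewrite exprn_gt0 ?mulr_gt0.
exists (Num.trunc (C / b ^+ 2)); set n := Num.trunc _.
have C_le : C <= n.+2%:R * b ^+ 2.
  have := truncnS_gt (C / b ^+ 2); rewrite -/n ltr_pdivrMr // => /ltW/le_trans.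
  by apply; rewrite ler_pM2r // ler_nat leqnSn.
have D2_ge0 : 0 <= D - 2 by rewrite subr_ge0.
have b_ge0 : 0 <= b := mulr_ge0 (ltW e_gt0) (ltW D_gt0).
have : (C + n%:R * (2 - D) ^+ 2) / n.+2%:R <= (D - 2 + b) ^+ 2.
  rewrite ler_pdivrMr // -subr_ge0.
  have -> : (D - 2 + b) ^+ 2 * n.+2%:R - (C + n%:R * (2 - D) ^+ 2) =
    (n.+2%:R * b ^+ 2 - C) + 2 * (D - 2) ^+ 2 + 2 * (D - 2) * b * n.+2%:R.
    by rewrite -[n.+2]addn2 natrD; ring.
  apply: addr_ge0; first apply: addr_ge0.
  - by rewrite subr_ge0.
  - by rewrite mulr_ge0 ?sqr_ge0.
  - exact: mulr_ge0 (mulr_ge0 (mulr_ge0 (ler0n _ 2) D2_ge0) b_ge0) (ler0n _ _).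
rewrite -ler_sqrt ?sqr_ge0 // sqrtr_sqr (ger0_norm (addr_ge0 D2_ge0 b_ge0)).
have DV_ge0 : 0 <= D^-1 by rewrite invr_ge0 ltW.
move=> /(ler_wpM2r DV_ge0)/le_trans; apply.
by rewrite mulrDl mulrBl divff ?gt_eqF // mulrK ?unitfE ?gt_eqF.
Qed.

End UpperBound.

Section KazUpperBound.
Variables (R : realType) (q : R).
Hypothesis q_gt0 : 0 < q.
Local Open Scope ereal_scope.

Lemma kaz_val_unif n : kaz_val q [:: 1%N] (unif_vec R n) =
  (Num.sqrt ((2 * (1 - qint q 2) ^+ 2 + 1 + n%:R * (2 - qint q 2) ^+ 2) / n.+2%:R)
   / qint q 2)%:E.
Proof.
have D_gt0 : (0 < qint q 2)%R := lt_le_trans (ltr0Sn _ 1) (qint2_ge2 q_gt0).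
rewrite /kaz_val big_cons big_nil /l2norm normsq_rho1_unif_sub /qdim.
case: pselect => [_ | []]; last by rewrite /l2 normsq_rho1_unif_sub ltry.
apply/max_idPl; rewrite /= -EFinM lee_fin.
by rewrite divr_ge0 ?sqrtr_ge0 // ltW.
Qed.

Lemma Kaz_rho_le : Kaz_rho q <= (1 - 2 / qint q 2)%:E.
Proof.
apply/lee_addgt0Pr => e e_gt0.
have [n n_le] := sqrt_defect_le (qint2_ge2 q_gt0) e_gt0.
apply: le_trans (ereal_inf_lbound _) _.
  by exists [:: 1%N]; first exact: fin_gen_set1.
apply: le_trans (ereal_inf_lbound _) _.
  by exists (unif_vec R n); first exact: normsq_unif_vec.
by rewrite kaz_val_unif -EFinD lee_fin.
Qed.

End KazUpperBound.

Unset Implicit Arguments.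

Theorem proposition4p6 (R : realType) (q : R) (hq0 : 0 < q) (hq1 : q <= 1) :
  Kaz_rho q = (1 - 2 / qint q 2)%:E /\
  Kaz_rho q = ((1 - q) ^+ 2 / (q ^+ 2 + 1))%:E.
Proof.
have Kaz_eq : Kaz_rho q = (1 - 2 / qint q 2)%:E.
  by apply/eqP; rewrite eq_le Kaz_rho_le // Kaz_rho_ge.
split=> //; rewrite Kaz_eq qint2 //; congr EFin.
have q2_gt0 : 0 < q ^+ 2 + 1 by rewrite addr_gt0 ?exprn_gt0.
by field; rewrite (gt_eqF q2_gt0) (gt_eqF hq0).
Qed.
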